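(* Let $\mathcal{G}$ be a simple undirected graph on $N$ vertices with no isolated vertices, with adjacency matrix $\mathbf{A}\in\{0,1\}^{N\times N}$ and degree matrix $\mathbf{D}=\operatorname{diag}(\mathbf{A}\mathbf{1})$. Let $\lambda$ be an eigenvalue of $$\mathbf{L}=\mathbf{D}^{-1/2}\mathbf{A}\mathbf{D}^{-1/2}-\operatorname{diag}\big(\mathbf{D}^{-1/2}\mathbf{A}\mathbf{D}^{-1/2}\mathbf{1}\big).$$ Then $|\lambda|\le 2\sqrt{N}$.
   Context: For a vector $\mathbf{w}$, $\operatorname{diag}(\mathbf{w})$ is the diagonal matrix with diagonal $\mathbf{w}$; $\mathbf{1}$ is the all-ones vector. *)

From mathcomp Require Import all_boot all_order all_algebra all_field.
Set Implicit Arguments. Unset Strict Implicit. Unset Printing Implicit Defensive.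
Import Order.TTheory GRing.Theory Num.Theory.
Local Open Scope ring_scope.

Definition simple_graph (N : nat) (e : rel 'I_N) :=
  symmetric e /\ irreflexive e.

Definition no_isolated (N : nat) (e : rel 'I_N) :=
  forall i : 'I_N, exists j : 'I_N, e i j.

Definition adjmx (N : nat) (e : rel 'I_N) : 'M[algC]_N :=
  \matrix_(i, j) (e i j)%:R.

Definition ones (N : nat) : 'cV[algC]_N := const_mx 1.

Definition degmx (N : nat) (e : rel 'I_N) : 'M[algC]_N :=
  diag_mx (adjmx e *m ones N)^T.

Definition degmx_invsqrt (N : nat) (e : rel 'I_N) : 'M[algC]_N :=
  diag_mx (\row_i (sqrtC ((adjmx e *m ones N) i ord0))^-1).

Definition Lmx (N : nat) (e : rel 'I_N) : 'M[algC]_N :=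
  let S := degmx_invsqrt e *m adjmx e *m degmx_invsqrt e in
  S - diag_mx (S *m ones N)^T.

(* Gershgorin-type argument in the 1-norm: a left eigenvector v of M satisfies
   |lambda| |v|_1 = |v M|_1 <= (max absolute row sum of M) |v|_1, so every
   eigenvalue is bounded by the largest absolute row sum.  Subtracting the
   diagonal of row sums at most doubles absolute row sums, and a row of
   D^{-1/2} A D^{-1/2} has absolute sum at most d_i / sqrt d_i = sqrt d_i
   <= sqrt N, because every degree is at least 1. *)

From mathcomp Require Import all_boot all_order all_algebra all_field.
Set Implicit Arguments. Unset Strict Implicit. Unset Printing Implicit Defensive.
Import Order.TTheory GRing.Theory Num.Theory.
Local Open Scope ring_scope.

Section AbsoluteRowSums.
Variables (R : numFieldType) (n : nat).
Implicit Types (M : 'M[R]_n) (v : 'rV[R]_n).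

Lemma sum_norm_mulmx_le v M c :
    (forall i, \sum_j `|M i j| <= c) ->
  \sum_j `|(v *m M) 0 j| <= c * \sum_i `|v 0 i|.
Proof.
move=> rowM; have col_le j : `|(v *m M) 0 j| <= \sum_i `|v 0 i| * `|M i j|.
  rewrite mxE; apply: le_trans (ler_norm_sum _ _ _) _.
  by under eq_bigr do rewrite normrM.
apply: le_trans (ler_sum _ (fun j _ => col_le j)) _.
rewrite exchange_big mulr_sumr; apply: ler_sum => i _ /=.
by rewrite -mulr_sumr mulrC ler_wpM2r.
Qed.

Lemma sum_norm_row_gt0 v : v != 0 -> 0 < \sum_i `|v 0 i|.
Proof.
move=> v_neq0; rewrite lt_def sumr_ge0 // andbT.
apply: contraNneq v_neq0 => /psumr_eq0P v0; apply/eqP/rowP => i.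
by rewrite mxE; apply/normr0_eq0/v0.
Qed.

Lemma normr_eigenvalue_le M c lambda :
    (forall i, \sum_j `|M i j| <= c) -> eigenvalue M lambda -> `|lambda| <= c.
Proof.
move=> rowM /eigenvalueP [v vM v_neq0].
rewrite -(ler_pM2r (sum_norm_row_gt0 v_neq0)) mulr_sumr.
apply: le_trans (sum_norm_mulmx_le v rowM).
by rewrite vM; under [leRHS]eq_bigr do rewrite mxE normrM.
Qed.

Lemma sum_norm_sub_diag_rowsum_le M i :
  \sum_j `|(M - diag_mx (M *m const_mx 1)^T) i j| <= 2 * \sum_j `|M i j|.
Proof.
have diag_norm : \sum_j `|diag_mx (M *m const_mx 1)^T i j| <= \sum_j `|M i j|.
  rewrite (bigD1 i) //= big1 => [|j /negbTE ji]; last first.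
    by rewrite !mxE eq_sym ji mulr0n normr0.
  rewrite addr0 !mxE eqxx mulr1n; apply: le_trans (ler_norm_sum _ _ _) _.
  by apply: ler_sum => j _; rewrite mxE mulr1.
rewrite mulr2n mulrDl mul1r; apply: le_trans (lerD (lexx _) diag_norm).
by rewrite -big_split /=; apply: ler_sum => j _; rewrite !mxE ler_normB.
Qed.

End AbsoluteRowSums.

Section NormalizedAdjacency.
Variables (N : nat) (e : rel 'I_N).
Hypothesis e_no_isolated : no_isolated e.

Lemma adjmx_rowsum i : (adjmx e *m ones N) i ord0 = #|e i|%:R.
Proof.
rewrite mxE -sum1_card natr_sum [RHS]big_mkcond.
by apply: eq_bigr => j _; rewrite !mxE mulr1 unfold_in; case: (e i j).
Qed.

Let s i : algC := sqrtC #|e i|%:R.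

Lemma degmx_invsqrtE : degmx_invsqrt e = diag_mx (\row_i (s i)^-1).
Proof. by congr diag_mx; apply/rowP => i; rewrite [LHS]mxE [RHS]mxE adjmx_rowsum. Qed.

Lemma sqrt_deg_ge1 i : 1 <= s i.
Proof.
have [j eij] := e_no_isolated i.
rewrite -sqrtC1 ler_sqrtC ?nnegrE // ler1n; apply/card_gt0P.
by exists j.
Qed.

Lemma normalized_adjmxE i j :
  (degmx_invsqrt e *m adjmx e *m degmx_invsqrt e) i j
    = (s i)^-1 * (e i j)%:R * (s j)^-1.
Proof. by rewrite degmx_invsqrtE mul_mx_diag mul_diag_mx !mxE. Qed.

Lemma sum_norm_normalized_adjmx_le i :
  \sum_j `|(degmx_invsqrt e *m adjmx e *m degmx_invsqrt e) i j| <= sqrtC N%:R.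
Proof.
have s_gt0 k : 0 < s k by apply: lt_le_trans (sqrt_deg_ge1 k).
have entry_le j : `|(degmx_invsqrt e *m adjmx e *m degmx_invsqrt e) i j|
    <= (s i)^-1 * (e i j)%:R.
  have inv_s_ge0 k : 0 <= (s k)^-1 by rewrite invr_ge0 sqrtC_ge0.
  rewrite normalized_adjmxE ger0_norm ?mulr_ge0 //.
  apply: ler_piMr; first by rewrite mulr_ge0.
  by rewrite invf_le1 ?sqrt_deg_ge1.
apply: le_trans (ler_sum _ (fun j _ => entry_le j)) _.
have -> : \sum_j (s i)^-1 * (e i j)%:R = (s i)^-1 * #|e i|%:R.
  rewrite -mulr_sumr -adjmx_rowsum mxE; congr (_ * _).
  by apply: eq_bigr => j _; rewrite !mxE mulr1.
rewrite -[X in _ * X](sqrtCK #|e i|%:R) -/(s i) expr2 mulKf ?gt_eqF //.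
by rewrite ler_sqrtC ?nnegrE // ler_nat -[leqRHS]card_ord max_card.
Qed.

End NormalizedAdjacency.

Theorem proposition8 (N : nat) (e : rel 'I_N) (lambda : algC) :
  simple_graph e -> no_isolated e ->
  eigenvalue (Lmx e) lambda ->
  `|lambda| <= 2 * sqrtC (N%:R).
Proof.
move=> _ e_no_isolated; apply: normr_eigenvalue_le => i.
apply: le_trans (sum_norm_sub_diag_rowsum_le _ i) _.
by rewrite ler_pM2l // sum_norm_normalized_adjmx_le.
Qed.
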